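(* Let $\mathbb{F}$ be an algebraically closed field and $V$ a $2m$-dimensional $\mathbb{F}$-vector space with a split nondegenerate quadratic form, with isometry group $O(V)$. Let $A\le O(V)$ be a finite abelian group of odd order not divisible by the characteristic of $\mathbb{F}$. (i) If some nontrivial linear character of $A$ occurs in $V$ with multiplicity at least $2$, then the centralizer $C_{O(V)}(A)$ contains a root group of $O(V)$. (ii) If the trivial character of $A$ occurs in $V$ with multiplicity at least $4$, then $C_{O(V)}(A)$ contains a root group of $O(V)$.
   Context: Let $B$ be the symmetric bilinear form associated with the quadratic form. A root group of $O(V)$ is a subgroup of the form $\{x\mapsto x+t(B(x,w)u-B(x,u)w): t\in\mathbb{F}\}$, where $u,w$ span a $2$-dimensional totally singular subspace of $V$. The multiplicity of a linear character $\lambda$ of $A$ in $V$ is the dimension of $\{v\in V: av=\lambda(a)v \text{ for all } a\in A\}$. *)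

From HB Require Import structures.
From mathcomp Require Import all_boot all_order all_algebra all_fingroup.
From mathcomp Require Import mxrepresentation.
Set Implicit Arguments. Unset Strict Implicit. Unset Printing Implicit Defensive.
Import GRing.Theory.
Local Open Scope ring_scope.

(* V = 'rV[F]_n (row vectors); a quadratic form is Q(x) = x M x^T for a
   matrix M (every quadratic form on F^n has this shape). Linear maps act on
   the right of row vectors: x |-> x *m g. *)

Definition qf (F : fieldType) (n : nat) (M : 'M[F]_n) (x : 'rV[F]_n) : F :=
  (x *m M *m x^T) 0 0.

Definition bf (F : fieldType) (n : nat) (M : 'M[F]_n) (x y : 'rV[F]_n) : F :=
  qf M (x + y) - qf M x - qf M y.

Definition nondeg_qf (F : fieldType) (n : nat) (M : 'M[F]_n) : Prop :=
  forall x : 'rV[F]_n, (forall y, bf M x y = 0) -> x = 0.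

(* split: there is a totally singular subspace of dimension m (Witt index m)
   in the 2m-dimensional space *)
Definition split_qf (F : fieldType) (m : nat) (M : 'M[F]_(2 * m)) : Prop :=
  exists U : 'M[F]_(m, 2 * m),
    row_free U /\ forall x : 'rV[F]_(2 * m), (x <= U)%MS -> qf M x = 0.

Definition in_O (F : fieldType) (n : nat) (M : 'M[F]_n) (g : 'M[F]_n) : Prop :=
  g \in unitmx /\ forall x : 'rV[F]_n, qf M (x *m g) = qf M x.

Definition linear_char (F : fieldType) (gT : finGroupType) (A : {set gT})
    (lam : gT -> F) : Prop :=
  (forall a, a \in A -> lam a != 0) /\ {in A &, {morph lam : x y / (x * y)%g >-> x * y}}.

Definition multiplicity (F : fieldType) (gT : finGroupType) (n : nat)
    (rho : gT -> 'M[F]_n) (A : {set gT}) (lam : gT -> F) : nat :=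
  \rank (\bigcap_(a in A) kermx (rho a - (lam a)%:M))%MS.

Definition tot_sing_pair (F : fieldType) (n : nat) (M : 'M[F]_n)
    (u w : 'rV[F]_n) : Prop :=
  \rank (col_mx u w) = 2%N /\
  forall a b : F, qf M (a *: u + b *: w) = 0.

Definition root_map (F : fieldType) (n : nat) (M : 'M[F]_n)
    (u w : 'rV[F]_n) (t : F) (x : 'rV[F]_n) : 'rV[F]_n :=
  x + t *: (bf M x w *: u - bf M x u *: w).

Definition centralizer_has_root_group (F : fieldType) (gT : finGroupType)
    (n : nat) (M : 'M[F]_n) (rho : gT -> 'M[F]_n) (A : {set gT}) : Prop :=
  exists u w : 'rV[F]_n, tot_sing_pair M u w /\
    forall t : F, exists g : 'M[F]_n,
      [/\ in_O M g,
          (forall a, a \in A -> g *m rho a = rho a *m g) &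
          (forall x, x *m g = root_map M u w t x)].

(* If u and w span a totally singular plane and every a in A acts on it by
   diag(c, c^-1), then the root elements x |-> x + t (B(x,w) u - B(x,u) w)
   commute with A, since the two terms get scaled by c^-1 * c = 1.
   (i) As |A| is odd, a nontrivial linear character lam has lam^2 <> 1, so its
   eigenvectors and those of lam^-1 are isotropic and lam <> lam^-1.
   Nondegeneracy gives y with B(u1, y) <> 0 for some u1 in the lam-space, and
   the average of lam(a) y a over A is a lam^-1-eigenvector w, nonzero because
   it still pairs with u1 (|A| is invertible in F). A lam-space of dimension
   >= 2 then contains a u orthogonal to w.
   (ii) Over an algebraically closed field every subspace of dimension >= 2
   contains a nonzero isotropic vector: pick an isotropic u in the fixed space
   W, then an isotropic w in the (>= 2)-dimensional part of W orthogonal to u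
   and cut out by a functional not vanishing on u. *)

From HB Require Import structures.
From mathcomp Require Import all_boot all_order all_algebra all_fingroup.
From mathcomp Require Import mxrepresentation.
From mathcomp Require Import cyclic ring zify.
Set Implicit Arguments.
Unset Strict Implicit.
Unset Printing Implicit Defensive.

Import GRing.Theory.
Local Open Scope ring_scope.

Section QuadraticForm.
Variables (F : fieldType) (n : nat) (M : 'M[F]_n).
Local Notation S := (M + M^T).

Lemma bf_mxE x y : bf M x y = (x *m S *m y^T) 0 0.
Proof.
have mxE11 (B C : 'M[F]_1) : (B + C) 0 0 = B 0 0 + C 0 0 by rewrite mxE.
rewrite /bf /qf linearD /= !mulmxDl !mulmxDr !mxE11 mulmxDl mxE11.
have -> : (y *m M *m x^T) 0 0 = (x *m M^T *m y^T) 0 0.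
  have -> : (y *m M *m x^T) 0 0 = ((y *m M *m x^T)^T) 0 0 by rewrite [RHS]mxE.
  by rewrite !trmx_mul trmxK mulmxA.
ring.
Qed.

Lemma bf_kermx x w : (x <= kermx (S *m w^T))%MS -> bf M x w = 0.
Proof. by rewrite sub_kermx mulmxA bf_mxE => /eqP->; rewrite mxE. Qed.

Lemma bf_sym x y : bf M x y = bf M y x.
Proof. by rewrite /bf [x + y]addrC; ring. Qed.

Lemma bfDr x y z : bf M x (y + z) = bf M x y + bf M x z.
Proof. by rewrite !bf_mxE [(y + z)^T]linearD /= mulmxDr mxE. Qed.

Lemma bfZr x c y : bf M x (c *: y) = c * bf M x y.
Proof. by rewrite !bf_mxE [(c *: y)^T]linearZ /= -scalemxAr mxE. Qed.

Lemma bfZl x c y : bf M (c *: y) x = c * bf M y x.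
Proof. by rewrite bf_sym bfZr bf_sym. Qed.

Lemma bf0r x : bf M x 0 = 0.
Proof. by rewrite -(scale0r 0) bfZr mul0r. Qed.

Lemma bf_sumr x (I : finType) (P : pred I) (f : I -> 'rV[F]_n) :
  bf M x (\sum_(i | P i) f i) = \sum_(i | P i) bf M x (f i).
Proof. exact: (big_morph (bf M x) (bfDr x) (bf0r x)). Qed.

Lemma qfZ c x : qf M (c *: x) = c ^+ 2 * qf M x.
Proof.
by rewrite /qf linearZ /= -!scalemxAl -scalemxAr !mxE expr2 mulrA.
Qed.

Lemma qfD x y : qf M (x + y) = qf M x + qf M y + bf M x y.
Proof. by rewrite /bf; ring. Qed.

Lemma bf_diag x : bf M x x = 2%:R * qf M x.
Proof. by rewrite /bf -mulr2n -scaler_nat qfZ; ring. Qed.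

Lemma isometry_bf g x y : in_O M g -> bf M (x *m g) (y *m g) = bf M x y.
Proof. by case=> _ gQ; rewrite /bf -mulmxDl !gQ. Qed.

Lemma isometry_eigen_isotropic g c v :
  in_O M g -> v *m g = c *: v -> c ^+ 2 != 1 -> qf M v = 0.
Proof.
case=> _ gQ vg c2; have := gQ v; rewrite vg qfZ => /eqP.
rewrite -subr_eq0 -{2}[qf M v]mul1r -mulrBl mulf_eq0 subr_eq0 (negbTE c2).
by move/eqP.
Qed.

Lemma qf_isotropic_orth a b u w :
  qf M u = 0 -> qf M w = 0 -> bf M u w = 0 -> qf M (a *: u + b *: w) = 0.
Proof. by move=> qu qw buw; rewrite qfD !qfZ bfZl bfZr qu qw buw; ring. Qed.

Lemma eq_mx_row_mul (B C : 'M[F]_n) : (forall x : 'rV_n, x *m B = x *m C) -> B = C.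
Proof.
by move=> BC; apply/row_matrixP => i; rewrite -(mul1mx B) -(mul1mx C) !row_mul BC.
Qed.

Definition root_mx (u w : 'rV[F]_n) := S *m w^T *m u - S *m u^T *m w.

Lemma root_mxE u w x : x *m root_mx u w = bf M x w *: u - bf M x u *: w.
Proof.
have mx11_mul (c : 'M[F]_1) (v : 'rV[F]_n) : c *m v = c 0 0 *: v.
  by rewrite {1}[c]mx11_scalar mul_scalar_mx.
by rewrite /root_mx mulmxBr !mulmxA !mx11_mul !bf_mxE.
Qed.

Lemma tot_sing_pair_isotropic u w :
  tot_sing_pair M u w -> [/\ qf M u = 0, qf M w = 0 & bf M u w = 0].
Proof.
case=> _ uw0; have := uw0 1 1; rewrite qfD.
have := uw0 0 1; have := uw0 1 0; rewrite !scale1r !scale0r addr0 add0r => -> ->.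
by rewrite !add0r.
Qed.

Lemma root_mx_sqr u w :
  qf M u = 0 -> qf M w = 0 -> bf M u w = 0 -> root_mx u w *m root_mx u w = 0.
Proof.
move=> qu qw buw; have bwu : bf M w u = 0 by rewrite bf_sym.
apply: eq_mx_row_mul => x; rewrite mulmxA [x *m _]root_mxE mulmx0 mulmxBl -!scalemxAl.
by rewrite !root_mxE !bf_diag qu qw buw bwu mulr0 !scale0r !subrr !scaler0 subrr.
Qed.

Lemma root_mx_isometry u w t :
  tot_sing_pair M u w -> in_O M (1%:M + t *: root_mx u w).
Proof.
move=> uw; have [qu qw buw] := tot_sing_pair_isotropic uw.
split.
  have inv : (1%:M + t *: root_mx u w) *m (1%:M - t *: root_mx u w) = 1%:M.
    rewrite mulmxDl !mulmxBr !mul1mx mulmx1 -scalemxAl -scalemxAr.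
    by rewrite root_mx_sqr // !scaler0 subr0 addrNK.
  by case: (mulmx1_unit inv).
move=> x; rewrite mulmxDr mulmx1 -scalemxAr root_mxE scalerBr !scalerA.
rewrite -scaleNr qfD (qf_isotropic_orth _ _ qu qw buw) addr0 bfDr !bfZr; ring.
Qed.

Lemma root_mx_commute u w g c :
  in_O M g -> c != 0 -> u *m g = c *: u -> w *m g = c^-1 *: w ->
  g *m root_mx u w = root_mx u w *m g.
Proof.
move=> gO c0 ug wg; apply: eq_mx_row_mul => x.
rewrite !mulmxA !root_mxE mulmxBl -!scalemxAl ug wg.
have bf_w : bf M (x *m g) w = c * bf M x w.
  have := isometry_bf x (c *: w) gO.
  by rewrite -scalemxAl wg scalerA mulfV // scale1r bfZr.
have bf_u : bf M (x *m g) u = c^-1 * bf M x u.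
  have := isometry_bf x (c^-1 *: u) gO.
  by rewrite -scalemxAl ug scalerA mulVf // scale1r bfZr.
by rewrite bf_w bf_u !scalerA mulrC [_ / c]mulrC.
Qed.

End QuadraticForm.

Lemma root_group_in_centralizer (F : fieldType) n (M : 'M[F]_n) (gT : finGroupType)
    (A : {set gT}) (rho : gT -> 'M[F]_n) u w :
  tot_sing_pair M u w -> (forall a, a \in A -> in_O M (rho a)) ->
  (forall a, a \in A ->
     exists2 c, c != 0 & u *m rho a = c *: u /\ w *m rho a = c^-1 *: w) ->
  centralizer_has_root_group M rho A.
Proof.
move=> uw rhoO eig; exists u, w; split=> // t.
exists (1%:M + t *: root_mx M u w); split.
- exact: root_mx_isometry.
- move=> a aA; have [c c0 [ug wg]] := eig a aA.
  rewrite mulmxDl mulmxDr mul1mx mulmx1 -scalemxAl -scalemxAr.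
  by rewrite (root_mx_commute (rhoO a aA) c0 ug wg).
- by move=> x; rewrite mulmxDr mulmx1 -scalemxAr root_mxE.
Qed.

Section RowSpaces.
Variables (F : fieldType) (n : nat).
Implicit Types (u w : 'rV[F]_n) (C : 'cV[F]_n).

Lemma mx11_eq0 (B : 'M[F]_1) : (B == 0) = (B 0 0 == 0).
Proof.
apply/eqP/eqP => [->|B0]; first by rewrite mxE.
by rewrite [B]mx11_scalar B0; apply/matrixP => i j; rewrite !ord1 !mxE.
Qed.

Lemma rank_cap_kermx p (K : 'M[F]_(p, n)) C :
  (\rank K <= (\rank (K :&: kermx C)).+1)%N.
Proof.
have := mxrank_sum_cap K (kermx C); have := rank_leq_col (K + kermx C)%MS.
have := rank_leq_col C; rewrite mxrank_ker; lia.
Qed.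

Lemma cap_kermx_neq0 p (K : 'M[F]_(p, n)) C :
  (1 < \rank K)%N -> exists2 v : 'rV_n, (v <= K :&: kermx C)%MS & v != 0.
Proof.
move=> K2; apply/rowV0Pn; rewrite -mxrank_eq0 -lt0n.
by have := rank_cap_kermx K C; lia.
Qed.

Lemma row_mul_neq0 u : u != 0 -> exists C, u *m C != 0.
Proof.
case/matrix0Pn => i [j uij]; exists (delta_mx j 0); rewrite -colE.
by apply/matrix0Pn; exists i, 0; rewrite mxE.
Qed.

Lemma rank_col_mx_indep u w :
  (forall a b, a *: u + b *: w = 0 -> a = 0 /\ b = 0) -> \rank (col_mx u w) = 2%N.
Proof.
move=> indep; apply/eqP; rewrite -[_ == _]/(row_free (col_mx u w)) -kermx_eq0.
apply/rowV0P => v /sub_kermxP.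
rewrite -[v]hsubmxK mul_row_col {1}[lsubmx v]mx11_scalar {1}[rsubmx v]mx11_scalar.
rewrite !mul_scalar_mx => /indep [l0 r0].
rewrite [lsubmx v]mx11_scalar [rsubmx v]mx11_scalar l0 r0.
by apply/matrixP => i j; rewrite !mxE; case: splitP => k _; rewrite !mxE mul0rn.
Qed.

Lemma kermx_indep u w C a b :
  u *m C != 0 -> w *m C = 0 -> w != 0 -> a *: u + b *: w = 0 -> a = 0 /\ b = 0.
Proof.
move=> uC wC w0 uw0.
have /eqP := congr1 (mulmx^~ C) uw0.
rewrite /= mulmxDl -!scalemxAl wC scaler0 addr0 mul0mx scalemx_eq0 (negbTE uC) orbF.
move=> /eqP a0; split=> //.
by move/eqP: uw0; rewrite a0 scale0r add0r scalemx_eq0 (negbTE w0) orbF => /eqP.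
Qed.

Lemma rank_col_mx_eigen u w (g : 'M[F]_n) c d :
  u != 0 -> w != 0 -> c != d -> u *m g = c *: u -> w *m g = d *: w ->
  \rank (col_mx u w) = 2%N.
Proof.
move=> u0 w0 cd ug wg; apply: rank_col_mx_indep => a b uw0.
have /eqP : (b * (c - d)) *: w = 0.
  have := congr1 (fun v => c *: v - v *m g) uw0.
  rewrite mulmxDl -!scalemxAl ug wg mul0mx scaler0 subr0 !scalerA => <-.
  rewrite scalerDr !scalerA opprD addrACA [a * c]mulrC subrr add0r -scalerBl.
  by rewrite mulrBr [c * b]mulrC.
rewrite scalemx_eq0 (negbTE w0) orbF mulf_eq0 subr_eq0 (negbTE cd) orbF => /eqP b0.
split=> //; move/eqP: uw0; rewrite b0 scale0r addr0 scalemx_eq0 (negbTE u0) orbF.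
by move/eqP.
Qed.

Lemma rank_col_mx_kermx u w C :
  u *m C != 0 -> w *m C = 0 -> w != 0 -> \rank (col_mx u w) = 2%N.
Proof.
by move=> uC wC w0; apply: rank_col_mx_indep => a b; apply: (kermx_indep uC wC w0).
Qed.

End RowSpaces.

Lemma nondeg_bf_neq0 (F : fieldType) n (M : 'M[F]_n) u :
  nondeg_qf M -> u != 0 -> exists y, bf M u y != 0.
Proof.
move=> ndM u0; have uS : u *m (M + M^T) != 0.
  apply: contraNneq u0 => uS0; apply/eqP/ndM => y.
  by rewrite bf_mxE uS0 mul0mx mxE.
have [C uSC] := row_mul_neq0 uS; exists C^T.
by rewrite bf_mxE trmxK -mx11_eq0.
Qed.

Lemma exists_isotropic (F : closedFieldType) n (M : 'M[F]_n) p (K : 'M[F]_(p, n)) :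
  (1 < \rank K)%N -> exists2 v : 'rV_n, (v <= K)%MS & (v != 0) && (qf M v == 0).
Proof.
move=> K2; have [u uK u0] : exists2 u : 'rV_n, (u <= K)%MS & u != 0.
  by apply/rowV0Pn; rewrite -mxrank_eq0 -lt0n ltnW.
have [qu0|qu] := eqVneq (qf M u) 0; first by exists u => //; rewrite u0 qu0 eqxx.
have [C uC] := row_mul_neq0 u0.
have [w wKC w0] := cap_kermx_neq0 C K2.
have wK : (w <= K)%MS := submx_trans wKC (capmxSl _ _).
have /eqP wC : w *m C == 0 by rewrite -sub_kermx (submx_trans wKC (capmxSr _ _)).
pose coef i := if i == 0%N then qf M w / qf M u else bf M u w / qf M u.
have [x] := @solve_monicpoly F 2 (fun i => - coef i) isT.
rewrite !big_ord_recl big_ord0 /= addr0 expr0 expr1 mulr1 /coef /= => xroot.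
exists (x *: u + w); first by rewrite addmx_sub // scalemx_sub.
apply/andP; split.
  apply/eqP; rewrite -[w]scale1r => /(kermx_indep uC wC w0) [_ /eqP].
  by rewrite oner_eq0.
rewrite qfD qfZ bfZl xroot; apply/eqP; field; exact: qu.
Qed.

Section LinearChar.
Variables (F : fieldType) (gT : finGroupType) (A : {group gT}) (lam : gT -> F).
Hypothesis lamA : linear_char A lam.

Lemma linear_char1 : lam 1%g = 1.
Proof.
have [lam0 lamM] := lamA; apply: (mulIf (lam0 _ (group1 A))).
by rewrite mul1r -lamM ?mulg1.
Qed.

Lemma linear_charX a k : a \in A -> lam (a ^+ k)%g = lam a ^+ k.
Proof.
move=> aA; elim: k => [|k IHk]; first by rewrite expg0 expr0 linear_char1.
by rewrite expgS lamA.2 ?groupX // IHk exprS.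
Qed.

Lemma linear_char_sqr_neq1 a :
  odd #|A| -> a \in A -> lam a != 1 -> lam a ^+ 2 != 1.
Proof.
move=> oddA aA; apply: contra => /eqP la2; apply/eqP.
have := linear_charX #|A| aA; rewrite expg_cardG // linear_char1.
by rewrite -(odd_double_half #|A|) oddA -mul2n exprD exprM la2 expr1n mulr1.
Qed.

End LinearChar.

Section Representation.
Variables (F : fieldType) (n : nat) (M : 'M[F]_n).
Variables (gT : finGroupType) (A : {group gT}) (rho : mx_representation F A n).
Hypothesis rhoO : forall a, a \in A -> in_O M (rho a).

Definition char_space (lam : gT -> F) : 'M_n :=
  (\bigcap_(a in A) kermx (rho a - (lam a)%:M))%MS.

Lemma char_spaceP lam (v : 'rV[F]_n) a :
  (v <= char_space lam)%MS -> a \in A -> v *m rho a = lam a *: v.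
Proof.
move=> /sub_bigcapmxP vW aA; have := vW a aA.
by rewrite sub_kermx mulmxBr mul_mx_scalar subr_eq0 => /eqP.
Qed.

Definition char_sum (lam : gT -> F) (y : 'rV[F]_n) :=
  \sum_(a in A) lam a *: (y *m rho a).

Lemma char_sum_eigen lam y b : linear_char A lam -> b \in A ->
  char_sum lam y *m rho b = (lam b)^-1 *: char_sum lam y.
Proof.
move=> lamA bA; rewrite /char_sum mulmx_suml scaler_sumr.
rewrite [RHS](reindex_inj (mulIg b)) /=.
apply: eq_big => [a|a aA]; first by rewrite groupMr.
rewrite -scalemxAl -mulmxA -repr_mxM ?groupMr // scalerA lamA.2 ?groupMr // mulrCA.
by rewrite mulVf ?mulr1 ?lamA.1.
Qed.

Lemma bf_char_sum lam (u y : 'rV[F]_n) : (u <= char_space lam)%MS ->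
  bf M u (char_sum lam y) = #|A|%:R * bf M u y.
Proof.
move=> uW; rewrite bf_sumr (eq_bigr (fun _ => bf M u y)) ?sumr_const ?mulr_natl //.
by move=> a aA; rewrite bfZr -bfZl -(char_spaceP uW aA) (isometry_bf _ _ (rhoO aA)).
Qed.

End Representation.

Lemma nontrivial_char_root_group (F : fieldType) n (M : 'M[F]_n) (gT : finGroupType)
    (A : {group gT}) (rho : mx_representation F A n) (lam : gT -> F) a0 :
  nondeg_qf M -> (forall a, a \in A -> in_O M (rho a)) -> #|A|%:R != 0 :> F ->
  linear_char A lam -> a0 \in A -> lam a0 ^+ 2 != 1 ->
  (1 < \rank (char_space rho lam))%N -> centralizer_has_root_group M rho A.
Proof.
move=> ndM rhoO cardA lamA a0A la2; set W := char_space rho lam => W2.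
have [u1 u1W u10] : exists2 u1 : 'rV_n, (u1 <= W)%MS & u1 != 0.
  by apply/rowV0Pn; rewrite -mxrank_eq0 -lt0n ltnW.
have [y u1y] := nondeg_bf_neq0 ndM u10.
set w := char_sum rho lam y.
have w0 : w != 0.
  have : bf M u1 w != 0 by rewrite bf_char_sum // mulf_neq0.
  by apply: contraNneq => ->; rewrite bf0r.
have [u uWw u0] := cap_kermx_neq0 ((M + M^T) *m w^T) W2.
have uW : (u <= W)%MS := submx_trans uWw (capmxSl _ _).
have buw : bf M u w = 0 := bf_kermx (submx_trans uWw (capmxSr _ _)).
have ug := char_spaceP uW a0A; have wg := char_sum_eigen rho y lamA a0A.
have la_neq_inv : lam a0 != (lam a0)^-1.
  by apply: contra la2 => /eqP la; rewrite expr2 {2}la mulfV ?lamA.1.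
have la_inv2 : (lam a0)^-1 ^+ 2 != 1 by rewrite exprVn invr_eq1.
apply: (root_group_in_centralizer (u := u) (w := w)) => //.
  split; first exact: rank_col_mx_eigen u0 w0 la_neq_inv ug wg.
  move=> a b; apply: qf_isotropic_orth buw.
    exact: isometry_eigen_isotropic (rhoO _ a0A) ug la2.
  exact: isometry_eigen_isotropic (rhoO _ a0A) wg la_inv2.
move=> a aA; exists (lam a); first exact: lamA.1.
by rewrite (char_spaceP uW aA) char_sum_eigen.
Qed.

Lemma trivial_char_root_group (F : closedFieldType) n (M : 'M[F]_n) (gT : finGroupType)
    (A : {group gT}) (rho : mx_representation F A n) :
  (forall a, a \in A -> in_O M (rho a)) ->
  (3 < \rank (char_space rho (fun _ => 1%R)))%N -> centralizer_has_root_group M rho A.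
Proof.
move=> rhoO; set W := char_space rho _ => W4.
have [u uW /andP [u0 /eqP qu]] := exists_isotropic M (ltnW (ltnW W4)).
have [C uC] := row_mul_neq0 u0.
set Wu := (W :&: kermx ((M + M^T) *m u^T))%MS.
have K2 : (1 < \rank (Wu :&: kermx C))%N.
  have := rank_cap_kermx W ((M + M^T) *m u^T); rewrite -/Wu.
  by have := rank_cap_kermx Wu C; lia.
have [w wK /andP [w0 /eqP qw]] := exists_isotropic M K2.
have wWu : (w <= Wu)%MS := submx_trans wK (capmxSl _ _).
have /eqP wC : w *m C == 0 by rewrite -sub_kermx (submx_trans wK (capmxSr _ _)).
have buw : bf M u w = 0.
  by rewrite bf_sym; apply: bf_kermx (submx_trans wWu (capmxSr _ _)).
apply: (root_group_in_centralizer (u := u) (w := w)) => //.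
  by split; [exact: rank_col_mx_kermx uC wC w0 | move=> a b; exact: qf_isotropic_orth].
move=> a aA; exists 1; first exact: oner_neq0.
have wW : (w <= W)%MS := submx_trans wWu (capmxSl _ _).
by rewrite invr1 (char_spaceP uW aA) (char_spaceP wW aA) !scale1r.
Qed.

Theorem lemmaD1 (F : closedFieldType) (m : nat) (M : 'M[F]_(2 * m))
    (gT : finGroupType) (A : {group gT})
    (rho : mx_representation F A (2 * m)) :
  nondeg_qf M -> split_qf M ->
  mx_faithful rho ->
  (forall a, a \in A -> in_O M (rho a)) ->
  abelian A -> odd #|A| ->
  (forall p : nat, p \in [pchar F] -> ~~ (p %| #|A|)%N) ->
  (forall lam : gT -> F, linear_char A lam ->
     (exists2 a, a \in A & lam a != 1) ->
     (2 <= multiplicity rho A lam)%N ->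
     centralizer_has_root_group M rho A) /\
  ((4 <= multiplicity rho A (fun _ : gT => 1%R : F))%N ->
     centralizer_has_root_group M rho A).
Proof.
move=> ndM _ _ rhoO _ oddA charA.
split=> [lam lamA [a aA la1] mult2 | mult4]; last exact: trivial_char_root_group.
have cardA : #|A|%:R != 0 :> F.
  rewrite natf_neq0_pchar; apply/pnatP => [|p p_pr pA]; first exact: cardG_gt0.
  by apply/negP => /charA; rewrite pA.
have la2 := linear_char_sqr_neq1 lamA oddA aA la1.
exact: nontrivial_char_root_group ndM rhoO cardA lamA aA la2 mult2.
Qed.
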